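(* Let $R$ be a commutative Noetherian ring, $I$ an ideal of $R$, $E$ an injective $R$-module and $K$ a submodule of $E$. Put $L:=E/K$. Then $\dfrac{L}{\Gamma_I(L)}\otimes_R \dfrac{R}{I}=0$.
   Context: For an $R$-module $N$, $\Gamma_I(N)=\bigcup_{n\geq 1}(0:_N I^n)$ is the submodule of elements annihilated by some power of $I$. *)

From HB Require Import structures.
From mathcomp Require Import all_boot all_order all_algebra.
Set Implicit Arguments. Unset Strict Implicit. Unset Printing Implicit Defensive.
Import GRing.Theory.
Local Open Scope ring_scope.

Definition is_ideal (R : comPzRingType) (I : R -> Prop) : Prop :=
  I 0 /\ (forall x y, I x -> I y -> I (x + y)) /\ (forall r x, I x -> I (r * x)).

Definition in_ideal_gen (R : comPzRingType) (s : seq R) (x : R) : Prop :=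
  exists c : seq R, size c = size s /\ x = \sum_(i < size s) c`_i * s`_i.

Definition noetherian (R : comPzRingType) : Prop :=
  forall I : R -> Prop, is_ideal I ->
    exists s : seq R, forall x, I x <-> in_ideal_gen s x.

Fixpoint ideal_pow (R : comPzRingType) (I : R -> Prop) (n : nat) : R -> Prop :=
  match n with
  | 0 => fun _ => True
  | n'.+1 => fun r => exists s : seq (R * R),
      (forall p, p \in s -> I p.1 /\ ideal_pow I n' p.2) /\
      r = \sum_(p <- s) p.1 * p.2
  end.

Definition is_submodule (R : comPzRingType) (M : lmodType R) (K : M -> Prop) : Prop :=
  K 0 /\ (forall x y, K x -> K y -> K (x + y)) /\ (forall (r : R) x, K x -> K (r *: x)).

Definition injective_module (R : comPzRingType) (E : lmodType R) : Prop :=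
  forall (M N : lmodType R) (f : {linear M -> N}) (g : {linear M -> E}),
    injective f -> exists h : {linear N -> E}, forall m, h (f m) = g m.

Definition Gamma (R : comPzRingType) (I : R -> Prop) (N : lmodType R) (x : N) : Prop :=
  exists n : nat, (0 < n)%N /\ forall r, ideal_pow I n r -> r *: x = 0.

Definition bilinear_map (R : comPzRingType) (M N P : lmodType R) (b : M -> N -> P) : Prop :=
  (forall x1 x2 y, b (x1 + x2) y = b x1 y + b x2 y) /\
  (forall (r : R) x y, b (r *: x) y = r *: b x y) /\
  (forall x y1 y2, b x (y1 + y2) = b x y1 + b x y2) /\
  (forall (r : R) x y, b x (r *: y) = r *: b x y).

(* M (x)_R N = 0, via the universal property of the tensor product:
   every R-bilinear map out of M x N into any R-module vanishes. *)
Definition tensor_zero (R : comPzRingType) (M N : lmodType R) : Prop :=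
  forall (P : lmodType R) (b : M -> N -> P), bilinear_map b -> forall x y, b x y = 0.

(* For a in R and e in E the annihilators ann(a^j e) increase, so by
   Noetherianity they stabilise at some j = m. Then r a^(m+1) + s |-> r a^m e
   (s in ann e) is a well defined linear map on the ideal a^(m+1) R + ann e;
   extending it to R by injectivity of E yields u with a^(m+1) u = a^m e and
   ann e <= ann u, so e = a u + t with a^m t = 0, and t keeps every torsion
   property of e. Doing this successively for generators a_1, ..., a_n of I
   gives E = I E + Gamma_I(E). Hence Q = L/Gamma_I(L) satisfies Q = I Q, and
   every bilinear map on Q x R/I vanishes. *)

From HB Require Import structures.
From mathcomp Require Import all_boot all_order all_algebra.
From mathcomp Require Import boolp.
Set Implicit Arguments. Unset Strict Implicit. Unset Printing Implicit Defensive.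
Import GRing.Theory.
Local Open Scope ring_scope.

Section SubmoduleType.
Variables (R : comPzRingType) (V : lmodType R) (P : V -> Prop).

(* The phantom argument lets the closure instance below be keyed on [HP]. *)
Definition submod_mem of is_submodule P : pred V := fun x => `[< P x >].

Hypothesis HP : is_submodule P.

Lemma submod_mem_closed : subsemimod_closed (submod_mem HP).
Proof.
case: HP => P0 [PD PZ]; split; [split|] => [|x y|a x].
- exact/asboolP.
- by move=> /asboolP Px /asboolP Py; apply/asboolP/PD.
- by move=> /asboolP Px; apply/asboolP/PZ.
Qed.

HB.instance Definition _ :=
  GRing.isSubmodClosed.Build R V (submod_mem HP) submod_mem_closed.

Inductive submod_type := SubmodType x of x \in submod_mem HP.
Definition submod_val (w : submod_type) := let: SubmodType x _ := w in x.
HB.instance Definition _ := [isSub for submod_val].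
HB.instance Definition _ := [Choice of submod_type by <:].
HB.instance Definition _ := [SubChoice_isSubLmodule of submod_type by <:].

Lemma submod_valP (w : submod_type) : P (val w).
Proof. by case: w => x /= /asboolP. Qed.

Lemma submod_Sub x : P x -> {w : submod_type | val w = x}.
Proof. by move=> Px; exists (SubmodType (asboolT Px)). Qed.

End SubmoduleType.

Lemma linear_regular (R : comPzRingType) (M : lmodType R) (f : {linear R^o -> M})
    (r : R) :
  f r = r *: f 1.
Proof. by rewrite -linearZ /= [r *: _]mulr1. Qed.

Lemma injective_graph_extension (R : comPzRingType) (E : lmodType R)
    (HE : injective_module E) (N : lmodType R) (G : N * E -> Prop)
    (HG : is_submodule G) (G_fun : forall n x y, G (n, x) -> G (n, y) -> x = y) :
  exists h : {linear N -> E}, forall n x, G (n, x) -> h n = x.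
Proof.
have fst_inj : injective (fst \o val : submod_type HG -> N).
  move=> w1 w2 eq_fst; apply: val_inj; move: eq_fst (submod_valP w1) (submod_valP w2).
  rewrite /=; case: (submod_val w1) (submod_val w2) => [n x] [n' y] /= <- Gnx Gny.
  by rewrite (G_fun _ _ _ Gnx Gny).
have [h h_ext] := HE _ _ _ (snd \o val) fst_inj.
exists h => n x Gnx; have [w val_w] := submod_Sub HG Gnx.
by have := h_ext w; rewrite /= val_w.
Qed.

Lemma injective_lift_power (R : comPzRingType) (E : lmodType R)
    (HE : injective_module E) (a : R) (e : E) (m : nat)
    (a_stable : forall r, (r * a ^+ m.+1) *: e = 0 -> (r * a ^+ m) *: e = 0) :
  exists u : E, a ^+ m.+1 *: u = a ^+ m *: e /\ forall s, s *: e = 0 -> s *: u = 0.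
Proof.
pose G (z : R^o * E) := exists r s : R,
  [/\ s *: e = 0, z.1 = r * a ^+ m.+1 + s & z.2 = (r * a ^+ m) *: e].
have HG : is_submodule G.
  split; [|split].
  - by exists 0, 0; rewrite !mul0r scale0r addr0.
  - move=> [x1 x2] [y1 y2] [r [s [es0 /= -> ->]]] [r' [s' [es'0 /= -> ->]]].
    exists (r + r'), (s + s'); split => /=.
    + by rewrite scalerDl es0 es'0 addr0.
    + by rewrite mulrDl addrACA.
    + by rewrite mulrDl scalerDl.
  - move=> c [x1 x2] [r [s [es0 /= -> ->]]].
    exists (c * r), (c * s); split => /=.
    + by rewrite -scalerA es0 scaler0.
    + by rewrite /GRing.scale /= mulrDr !mulrA.
    + by rewrite scalerA mulrA.
have G_fun n x y : G (n, x) -> G (n, y) -> x = y.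
  move=> [r [s [es0 /= -> ->]]] [r' [s' [es'0 /= eq_n ->]]].
  apply/eqP; rewrite -subr_eq0 -scalerBl -mulrBl; apply/eqP/a_stable.
  have : (r * a ^+ m.+1 + s) *: e = (r' * a ^+ m.+1 + s') *: e by rewrite eq_n.
  by rewrite !scalerDl es0 es'0 !addr0 mulrBl scalerBl => ->; rewrite subrr.
have [h hG] := injective_graph_extension HE HG G_fun.
exists (h 1); split.
- rewrite -linear_regular; apply: hG.
  by exists 1, 0; split; rewrite /= ?scale0r ?mul1r ?addr0.
- move=> s es0; rewrite -linear_regular; apply: hG.
  by exists 0, s; split; rewrite /= ?mul0r ?scale0r ?add0r.
Qed.

Lemma in_ideal_gen_nth (R : comPzRingType) (s : seq R) i :
  (i < size s)%N -> in_ideal_gen s s`_i.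
Proof.
move=> lt_i; exists (mkseq (fun j => (j == i)%:R) (size s)); split.
  by rewrite size_mkseq.
rewrite (bigD1 (Ordinal lt_i)) //= nth_mkseq // eqxx mul1r big1 ?addr0 // => j.
rewrite nth_mkseq // -val_eqE /= => /negbTE ->; exact: mul0r.
Qed.

Lemma exists_common_bound (n : nat) (P : nat -> nat -> Prop) :
  (forall i j k, (j <= k)%N -> P i j -> P i k) ->
  (forall i, (i < n)%N -> exists j, P i j) ->
  exists m, forall i, (i < n)%N -> P i m.
Proof.
move=> P_mono; elim: n => [|n IHn] P_ex; first by exists 0%N.
have [m Pm] := IHn (fun i lt_i => P_ex i (ltnW lt_i)).
have [j Pj] := P_ex n (ltnSn n).
exists (maxn m j) => i; rewrite ltnS leq_eqVlt => /predU1P [-> | lt_i].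
  by apply: P_mono Pj; rewrite leq_maxr.
by apply: P_mono (Pm i lt_i); rewrite leq_maxl.
Qed.

Lemma ann_mul_pow_mono (R : comPzRingType) (E : lmodType R) (a r : R) (e : E) j k :
  (j <= k)%N -> (r * a ^+ j) *: e = 0 -> (r * a ^+ k) *: e = 0.
Proof.
by move=> le_jk e0; rewrite -(subnKC le_jk) exprD mulrA mulrC -scalerA e0 scaler0.
Qed.

Lemma noetherian_ann_pow_stable (R : comPzRingType) (HR : noetherian R)
    (E : lmodType R) (a : R) (e : E) :
  exists m, forall r, (r * a ^+ m.+1) *: e = 0 -> (r * a ^+ m) *: e = 0.
Proof.
pose U r := exists j, (r * a ^+ j) *: e = 0.
have HU : is_ideal U.
  split; [|split].
  - by exists 0%N; rewrite mul0r scale0r.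
  - move=> x y [j xj] [k yk]; exists (maxn j k).
    rewrite mulrDl scalerDl (ann_mul_pow_mono _ xj) ?leq_maxl //.
    by rewrite (ann_mul_pow_mono _ yk) ?leq_maxr // addr0.
  - by move=> c x [j xj]; exists j; rewrite -mulrA -scalerA xj scaler0.
have [s Us] := HR U HU.
have [m sm] : exists m, forall i, (i < size s)%N -> (s`_i * a ^+ m) *: e = 0.
  apply: exists_common_bound => [i j k|i lt_i]; first exact: ann_mul_pow_mono.
  exact/Us/in_ideal_gen_nth.
exists m => r r0; have [c [_ ->]] : in_ideal_gen s r by apply/Us; exists m.+1.
rewrite mulr_suml scaler_suml big1 // => i _.
by rewrite -mulrA -scalerA sm ?scaler0.
Qed.

Lemma noetherian_injective_decomposition (R : comPzRingType) (HR : noetherian R)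
    (E : lmodType R) (HE : injective_module E) (a : nat -> R) (k : nat) (e : E) :
  exists (u : nat -> E) (t : E) (w : nat -> nat),
    e = \sum_(i < k) a i *: u i + t /\ forall i, (i < k)%N -> a i ^+ w i *: t = 0.
Proof.
elim: k => [|k [u [t [w [def_e tw]]]]].
  by exists (fun _ => 0), e, (fun _ => 0%N); rewrite big_ord0 add0r.
have [m a_stable] := noetherian_ann_pow_stable HR (a k) t.
have [v [av ann_v]] := injective_lift_power HE a_stable.
exists (fun j => if j == k then v else u j), (t - a k *: v),
  (fun j => if j == k then m else w j); split.
  rewrite big_ord_recr /= eqxx -addrA [a k *: v + _]addrC subrK def_e.
  by congr (_ + _); apply: eq_bigr => i _; rewrite ltn_eqF.
move=> i; rewrite ltnS leq_eqVlt => /predU1P [-> | lt_i].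
  by rewrite eqxx scalerBr scalerA -exprSr av subrr.
rewrite ltn_eqF // scalerBr tw // sub0r scalerA mulrC -scalerA.
by rewrite ann_v ?scaler0 ?oppr0 ?tw.
Qed.

Section GeneratedIdealPowers.
Variables (R : comPzRingType) (I : R -> Prop) (s : seq R).
Hypothesis I_gen : forall x, I x -> in_ideal_gen s x.

Definition annihilated_by_pow (M : lmodType R) (d : nat) (x : M) :=
  forall r, ideal_pow I d r -> r *: x = 0.

Lemma annihilated_by_powS (M : lmodType R) d (x : M) :
  (forall i, (i < size s)%N -> annihilated_by_pow d (s`_i *: x)) ->
  annihilated_by_pow d.+1 x.
Proof.
move=> sx r [l [Il ->]]; rewrite scaler_suml big1_seq // => pr.
move=> /Il [/I_gen [c [_ ->]] pr2].
rewrite mulr_suml scaler_suml big1 // => i _.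
by rewrite -mulrA -scalerA mulrC -scalerA sx ?scaler0.
Qed.

Lemma annihilated_by_gen_powers (M : lmodType R) (w : nat -> nat) (x : M) :
  (forall i, (i < size s)%N -> s`_i ^+ w i *: x = 0) ->
  annihilated_by_pow (\sum_(i < size s) w i).+1 x.
Proof.
move=> wx; move def_D: (\sum_(i < size s) w i)%N => D.
elim: D w x def_D wx => [|D IHD] w x sum_w wx; apply: annihilated_by_powS => i lt_i.
all: case w_i: (w i) => [|wi]; first by move: (wx i lt_i);
  rewrite w_i expr0 scale1r => -> r _; rewrite !scaler0.
all: rewrite (bigD1 (Ordinal lt_i)) //= w_i addSn in sum_w.
  by move: sum_w.
case: sum_w => sum_w.
pose w' j := if j == i then wi else w j.
apply: (IHD w') => [|j lt_j].
  rewrite -sum_w (bigD1 (Ordinal lt_i)) //= /w' eqxx; congr (_ + _)%N.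
  by apply: eq_bigr => j; rewrite -val_eqE => /negbTE ->.
rewrite /w'; case: eqP => [-> | _]; first by rewrite scalerA -exprSr -w_i wx.
by rewrite scalerA mulrC -scalerA wx ?scaler0.
Qed.

End GeneratedIdealPowers.

Definition in_ideal_span (R : comPzRingType) (I : R -> Prop) (M : lmodType R)
    (x : M) :=
  exists (k : nat) (a : nat -> R) (y : nat -> M),
    (forall i, (i < k)%N -> I (a i)) /\ x = \sum_(i < k) a i *: y i.

Lemma in_ideal_span_linear (R : comPzRingType) (I : R -> Prop) (M N : lmodType R)
    (f : {linear M -> N}) (x : M) :
  in_ideal_span I x -> in_ideal_span I (f x).
Proof.
move=> [k [a [y [Ia ->]]]]; exists k, a, (f \o y); split => //.
by rewrite linear_sum; apply: eq_bigr => i _; rewrite linearZ.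
Qed.

Lemma Gamma_linear (R : comPzRingType) (I : R -> Prop) (M N : lmodType R)
    (f : {linear M -> N}) (x : M) :
  Gamma I x -> Gamma I (f x).
Proof.
move=> [n [n_gt0 Ix]]; exists n; split=> // r /Ix.
by rewrite -linearZ => ->; rewrite linear0.
Qed.

Lemma injective_ideal_span_Gamma (R : comPzRingType) (HR : noetherian R)
    (I : R -> Prop) (HI : is_ideal I) (E : lmodType R) (HE : injective_module E)
    (e : E) :
  exists y t, [/\ in_ideal_span I y, Gamma I t & e = y + t].
Proof.
have [s Is] := HR I HI.
have [u [t [w [-> tw]]]] :=
  noetherian_injective_decomposition HR HE (nth 0 s) (size s) e.
exists (\sum_(i < size s) s`_i *: u i), t; split => //.
- by exists (size s), (nth 0 s), u; split => // i lt_i; apply/Is/in_ideal_gen_nth.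
- exists (\sum_(i < size s) w i).+1; split => //.
  by apply: annihilated_by_gen_powers tw => x /Is.
Qed.

Lemma tensor_zero_cyclic (R : comPzRingType) (I : R -> Prop) (M N : lmodType R)
    (n0 : N) (N_gen : forall y, exists r, y = r *: n0)
    (I_n0 : forall a, I a -> a *: n0 = 0)
    (M_span : forall x : M, in_ideal_span I x) :
  tensor_zero M N.
Proof.
move=> P b [bDl [bZl [_ bZr]]] x y.
have b0l z : b 0 z = 0 by rewrite -(scale0r 0) bZl scale0r.
have b0r z : b z 0 = 0 by rewrite -(scale0r 0) bZr scale0r.
have [r ->] := N_gen y; have [k [a [z [Ia ->]]]] := M_span x.
rewrite bZr (big_morph (b^~ n0) (fun x1 x2 => bDl x1 x2 n0) (b0l n0)).
rewrite big1 ?scaler0 // => i _.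
by rewrite bZl -bZr I_n0 ?b0r //; apply: Ia.
Qed.

Theorem lemma3p3 (R : comPzRingType) (HR : noetherian R)
  (I : R -> Prop) (HI : is_ideal I)
  (E : lmodType R) (HE : injective_module E)
  (K : E -> Prop) (HK : is_submodule K)
  (L : lmodType R) (pi : {linear E -> L})
  (pi_surj : forall y : L, exists x : E, pi x = y)
  (pi_ker : forall x : E, pi x = 0 <-> K x)
  (Q : lmodType R) (q : {linear L -> Q})
  (q_surj : forall y : Q, exists x : L, q x = y)
  (q_ker : forall x : L, q x = 0 <-> Gamma I x)
  (S : lmodType R) (p : {linear R^o -> S})
  (p_surj : forall y : S, exists x : R^o, p x = y)
  (p_ker : forall x : R^o, p x = 0 <-> I x) :
  tensor_zero Q S.
Proof.
apply: (@tensor_zero_cyclic _ I _ _ (p 1)).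
- by move=> y; have [r <-] := p_surj y; exists r; apply: linear_regular.
- by move=> a Ia; rewrite -linear_regular; apply/p_ker.
move=> x; have [l <-] := q_surj x; have [e <-] := pi_surj l.
have [y [t [Iy Gt ->]]] := injective_ideal_span_Gamma HR HI HE e.
have /q_ker qt0 := Gamma_linear pi Gt.
by rewrite !linearD qt0 addr0; do 2 apply: in_ideal_span_linear.
Qed.
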